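(* Let $\Bbbk$ be an algebraically closed field of characteristic $2$ and let $\mathfrak{u}(\mathfrak{m})$ be the algebra generated by $a,b,c$ with relations $ab+ba=c$, $ac+ca=a$, $bc+cb=b$, $a^4=b^4=0$, $c^2+c=0$. Then $\operatorname{Ext}^1_{\mathfrak{u}(\mathfrak{m})}(V_1,V_1)=0$.
   Context: $V_1$ is the three-dimensional module with basis $v_1,v_2,v_3$ and action $av_1=v_2$, $av_2=v_3$, $av_3=0$; $bv_1=0$, $bv_2=v_1$, $bv_3=v_2$; $cv_1=v_1$, $cv_2=0$, $cv_3=v_3$. *)

From HB Require Import structures.
From mathcomp Require Import all_boot all_order all_algebra all_field.
Set Implicit Arguments. Unset Strict Implicit. Unset Printing Implicit Defensive.
Import GRing.Theory.
Local Open Scope ring_scope.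

(* Modules over u(m) = k<a,b,c>/(ab+ba-c, ac+ca-a, bc+cb-b, a^4, b^4, c^2+c)
   on k^n (row vectors): the generators a, b, c act by v |-> v *m A, v *m B,
   v *m C.  All defining relations are invariant under reversing the order of
   products, so the row-vector (right action) convention is harmless. *)
Definition um_rep (k : fieldType) (n : nat) (A B C : 'M[k]_n) : Prop :=
  A *m B + B *m A = C /\
  A *m C + C *m A = A /\
  B *m C + C *m B = B /\
  A *m A *m A *m A = 0 /\
  B *m B *m B *m B = 0 /\
  C *m C + C = 0.

Definition um_hom (k : fieldType) (m n : nat)
  (A B C : 'M[k]_m) (A' B' C' : 'M[k]_n) (f : 'M[k]_(m, n)) : Prop :=
  [/\ A *m f = f *m A', B *m f = f *m B' & C *m f = f *m C'].

(* Ext^1(V, V) = 0 (Yoneda description): every short exact sequence of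
   u(m)-modules 0 -> V --i--> E --p--> V -> 0 splits.  (Any such E is finite
   dimensional, so E = k^n with some n.) *)
Definition Ext1_self_zero (k : fieldType) (m : nat) (A B C : 'M[k]_m) : Prop :=
  forall (n : nat) (A' B' C' : 'M[k]_n) (i : 'M[k]_(m, n)) (p : 'M[k]_(n, m)),
    um_rep A' B' C' ->
    um_hom A B C A' B' C' i -> um_hom A' B' C' A B C p ->
    row_free i -> row_full p -> i *m p = 0 -> (kermx p <= i)%MS ->
    exists s : 'M[k]_(m, n), um_hom A B C A' B' C' s /\ s *m p = 1%:M.

(* The module V_1 with basis v1,v2,v3 (indices 0,1,2); row j of the matrix
   is the image of v_(j+1). *)
Definition V1a (k : fieldType) : 'M[k]_3 :=
  \matrix_(i < 3, j < 3) (if (j == i.+1 :> nat) then 1 else 0).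
  (* a v1 = v2, a v2 = v3, a v3 = 0 *)
Definition V1b (k : fieldType) : 'M[k]_3 :=
  \matrix_(i < 3, j < 3) (if (j.+1 == i :> nat) then 1 else 0).
  (* b v1 = 0, b v2 = v1, b v3 = v2 *)
Definition V1c (k : fieldType) : 'M[k]_3 :=
  \matrix_(i < 3, j < 3) (if (i == j) && (i != 1 :> nat) then 1 else 0).
  (* c v1 = v1, c v2 = 0, c v3 = v3 *)

From HB Require Import structures.
From mathcomp Require Import all_boot all_order all_algebra all_field.
Import GRing.Theory.
Local Open Scope ring_scope.

(* In characteristic 2, c is idempotent and x c + c x = x for x = a, b, so a and b map
   c-fixed vectors into ker c and back.  Hence a vector e of a module with b e = 0, c e = e
   and a^3 e = 0 spans a copy e, a e, a^2 e of V_1, and such a lift e of v_1 splits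
   0 -> V_1 -> E -> V_1 -> 0.  Start from a c-fixed lift e1; then b e1 lies in i(V_1) and in
   ker c, i.e. in i(k v_2), where a b acts as the identity, so e := e1 - i(a y) with
   i(y) = b e1 has b e = 0.  Finally a^3 e lies in i(V_1) and is killed by c and, as
   a^4 = 0, by a; the only such vector of V_1 is 0. *)

Local Notation "''e_' j" := (delta_mx 0 j) (at level 8, j at level 2, format "''e_' j").

Lemma ord3P (j : 'I_3) : [\/ j = 0, j = 1 | j = 2].
Proof.
by case: j => -[|[|[|]]] ? //; [constructor 1|constructor 2|constructor 3]; apply: val_inj.
Qed.

Section ModuleV1.
Context {k : fieldType}.

Lemma V1_rowsE :
  (row 0 (V1a k) = 'e_1) * (row 1 (V1a k) = 'e_2) * (row 2 (V1a k) = 0) *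
  (row 0 (V1b k) = 0) * (row 1 (V1b k) = 'e_0) * (row 2 (V1b k) = 'e_1) *
  (row 0 (V1c k) = 'e_0) * (row 1 (V1c k) = 0) * (row 2 (V1c k) = 'e_2).
Proof.
by do !split; apply/rowP => j; rewrite !mxE; case: j => -[|[|[|]]].
Qed.

Lemma V1c_kernel {y : 'rV[k]_3} : y *m V1c k = 0 -> y = y 0 1 *: 'e_1.
Proof.
move=> /rowP yc; apply/rowP => j; have := yc j.
rewrite !mxE !big_ord_recl big_ord0 !mxE /=.
case: j => -[|[|[|]]] //= ?; rewrite ?mulr0 ?mulr1 ?addr0 ?add0r;
  [move=> h|move=> _|move=> h]; rewrite -?h; congr (y _ _); exact: val_inj.
Qed.

Lemma V1c_kernel_ab {y : 'rV[k]_3} : y *m V1c k = 0 -> y *m V1a k *m V1b k = y.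
Proof. by move=> /V1c_kernel ->; rewrite -!scalemxAl -rowE !V1_rowsE -rowE !V1_rowsE. Qed.

Lemma V1c_kernel_ac {y : 'rV[k]_3} : y *m V1c k = 0 -> y *m V1a k *m V1c k = y *m V1a k.
Proof. by move=> /V1c_kernel ->; rewrite -!scalemxAl -rowE !V1_rowsE -rowE !V1_rowsE. Qed.

Lemma V1c_kernel_a_eq0 {y : 'rV[k]_3} : y *m V1c k = 0 -> y *m V1a k = 0 -> y = 0.
Proof.
move=> /V1c_kernel ->; rewrite -scalemxAl -rowE !V1_rowsE => /rowP /(_ 2).
by rewrite !mxE /= mulr1 => ->; rewrite scale0r.
Qed.
End ModuleV1.

Lemma kermx_sub_factor {k : fieldType} {m n r} {p : 'M[k]_(n, m)} {i : 'M[k]_(r, n)}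
    (x : 'rV[k]_n) :
  (kermx p <= i)%MS -> x *m p = 0 -> exists y, x = y *m i.
Proof. by move=> ker_p /sub_kermxP xp; apply/submxP; apply: submx_trans xp ker_p. Qed.

Lemma row_free_intertwine_eq0 {k : fieldType} {m n} {i : 'M[k]_(m, n)} {M M'}
    {y : 'rV[k]_m} :
  row_free i -> M *m i = i *m M' -> y *m i *m M' = 0 -> y *m M = 0.
Proof.
by move=> free_i iM yM'; apply: (row_free_inj free_i); rewrite mul0mx -mulmxA iM mulmxA.
Qed.

Lemma oppmx_pchar2 {k : fieldType} (char2 : 2%N \in [pchar k]) {m n} (M : 'M[k]_(m, n)) :
  - M = M.
Proof. by rewrite -scaleN1r (oppr_pchar2 char2) scale1r. Qed.

Section Anticommutation.
Context {k : fieldType} {n : nat}.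

Lemma mulmx_anticomm {m} (x : 'M[k]_(m, n)) {X Y Z} :
  X *m Y + Y *m X = Z -> x *m X *m Y + x *m Y *m X = x *m Z.
Proof. by move=> <-; rewrite mulmxDr !mulmxA. Qed.

Context {C X : 'M[k]_n}.
Hypothesis XC : X *m C + C *m X = X.

Lemma anticomm_fixed_to_ker {x : 'rV[k]_n} : x *m C = x -> x *m X *m C = 0.
Proof.
by move=> xC; move: (mulmx_anticomm x XC); rewrite xC => /(canRL (addrK _)); rewrite subrr.
Qed.

Lemma anticomm_ker_to_fixed {x : 'rV[k]_n} : x *m C = 0 -> x *m X *m C = x *m X.
Proof. by move=> xC; move: (mulmx_anticomm x XC); rewrite xC mul0mx addr0. Qed.

End Anticommutation.

Section Orbit.
Context {k : fieldType} {n : nat}.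
Variables (A B C : 'M[k]_n) (e : 'rV[k]_n).
Hypotheses (char2 : 2%N \in [pchar k]) (rep : um_rep A B C).
Hypotheses (eB : e *m B = 0) (eC : e *m C = e) (eA3 : e *m A *m A *m A = 0).

Definition V1_orbit : 'M[k]_(3, n) := \matrix_(r < 3) [:: e; e *m A; e *m A *m A]`_r.

Lemma V1_orbit_hom : um_hom (V1a k) (V1b k) (V1c k) A B C V1_orbit.
Proof.
have [AB [AC [_ _]]] := rep.
have eAC := anticomm_fixed_to_ker AC eC.
have eAAC := anticomm_ker_to_fixed AC eAC.
have eAB : e *m A *m B = e by move: (mulmx_anticomm e AB); rewrite eB eC mul0mx addr0.
have eAAB : e *m A *m A *m B = e *m A.
  move: (mulmx_anticomm (e *m A) AB); rewrite eAB eAC => /(canRL (addrK _)).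
  by rewrite sub0r (oppmx_pchar2 char2).
split; apply/row_matrixP => r; rewrite !row_mul; case: (ord3P r) => ->;
  by rewrite !V1_rowsE ?mul0mx -?rowE !rowK /= ?eB ?eC ?eAC ?eAAC ?eAB ?eAAB ?eA3.
Qed.

Lemma V1_orbit_section p : um_hom A B C (V1a k) (V1b k) (V1c k) p ->
  e *m p = 'e_0 -> V1_orbit *m p = 1%:M.
Proof.
move=> [pA _ _] ep; have eAp : e *m A *m p = 'e_1.
  by rewrite -mulmxA pA mulmxA ep -rowE V1_rowsE.
apply/row_matrixP => r; rewrite row_mul row1.
case: (ord3P r) => ->; rewrite rowK //=.
by rewrite -mulmxA pA mulmxA eAp -rowE V1_rowsE.
Qed.
End Orbit.

Section LiftGenerator.
Context {k : fieldType} {n : nat} {A B C : 'M[k]_n}.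
Context {i : 'M[k]_(3, n)} {p : 'M[k]_(n, 3)}.
Hypotheses (char2 : 2%N \in [pchar k]) (rep : um_rep A B C).
Hypotheses (hom_i : um_hom (V1a k) (V1b k) (V1c k) A B C i)
  (hom_p : um_hom A B C (V1a k) (V1b k) (V1c k) p).
Hypotheses (free_i : row_free i) (full_p : row_full p)
  (ip : i *m p = 0) (ker_p : (kermx p <= i)%MS).

Lemma exists_C_fixed_lift : exists e : 'rV[k]_n, e *m p = 'e_0 /\ e *m C = e.
Proof.
have [P Pp] := row_fullP full_p; have [_ _ pC] := hom_p.
have CC : C *m C = C.
  have [_ [_ [_ [_ [_ CC]]]]] := rep.
  by apply/eqP; rewrite -[X in _ == X](oppmx_pchar2 char2) -addr_eq0 CC.
exists ('e_0 *m P *m C); split; last by rewrite -mulmxA CC.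
by rewrite -mulmxA pC mulmxA -(mulmxA _ P) Pp mulmx1 -rowE V1_rowsE.
Qed.

Lemma exists_generator_lift :
  exists e : 'rV[k]_n, [/\ e *m p = 'e_0, e *m B = 0 & e *m C = e].
Proof.
have [e1 [e1p e1C]] := exists_C_fixed_lift.
have [_ [_ [BC _]]] := rep; have [iA iB iC] := hom_i; have [_ pB _] := hom_p.
have [y e1B] : exists y, e1 *m B = y *m i.
  by apply: (kermx_sub_factor _ ker_p); rewrite -mulmxA pB mulmxA e1p -rowE V1_rowsE.
have yC : y *m V1c k = 0.
  by apply: (row_free_intertwine_eq0 free_i iC); rewrite -e1B; apply: anticomm_fixed_to_ker.
exists (e1 - y *m V1a k *m i); split.
- by rewrite mulmxBl e1p -(mulmxA _ i) ip mulmx0 subr0.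
- by rewrite mulmxBl e1B -!mulmxA -iB !mulmxA V1c_kernel_ab // subrr.
- by rewrite mulmxBl e1C -!mulmxA -iC !mulmxA V1c_kernel_ac.
Qed.

Lemma generator_lift_cube {e : 'rV[k]_n} :
  e *m p = 'e_0 -> e *m C = e -> e *m A *m A *m A = 0.
Proof.
move=> ep eC; have [_ [AC [_ [A4 _]]]] := rep; have [iA _ iC] := hom_i.
have [pA _ _] := hom_p.
have eAAAC : e *m A *m A *m A *m C = 0 :=
  anticomm_fixed_to_ker AC (anticomm_ker_to_fixed AC (anticomm_fixed_to_ker AC eC)).
have [u eAAA] : exists u, e *m A *m A *m A = u *m i.
  apply: (kermx_sub_factor _ ker_p); do 3 rewrite -(mulmxA _ A p) pA mulmxA.
  by rewrite ep -rowE V1_rowsE -rowE V1_rowsE -rowE V1_rowsE.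
have uC : u *m V1c k = 0.
  by apply: (row_free_intertwine_eq0 free_i iC); rewrite -eAAA eAAAC.
have uA : u *m V1a k = 0.
  apply: (row_free_intertwine_eq0 free_i iA); rewrite -eAAA.
  have -> : e *m A *m A *m A *m A = e *m (A *m A *m A *m A) by rewrite !mulmxA.
  by rewrite A4 mulmx0.
by rewrite eAAA (V1c_kernel_a_eq0 uC uA) mul0mx.
Qed.
End LiftGenerator.

Theorem lemma3p8 (k : closedFieldType) (hchar : 2%N \in [pchar k]) :
  Ext1_self_zero (V1a k) (V1b k) (V1c k).
Proof.
move=> n A B C i p rep hom_i hom_p free_i full_p ip ker_p.
have [e [ep eB eC]] := exists_generator_lift hchar rep hom_i hom_p free_i full_p ip ker_p.
have eA3 := generator_lift_cube rep hom_i hom_p free_i ker_p ep eC.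
exists (V1_orbit A e); split; first exact: V1_orbit_hom.
exact: V1_orbit_section hom_p ep.
Qed.
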